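(* Let $\Gamma$ be a geometric distance-regular graph with diameter $D\geq 2$ and intersection number $c_2\geq 2$. Then (i) $\tau_2\geq \psi_1$, and (ii) $\Gamma$ contains an induced quadrangle (a set of four vertices inducing a $4$-cycle).
   Context: A finite connected graph $\Gamma$ with diameter $D$ is distance-regular if there are integers $b_i,c_i$ ($0\le i\le D$) such that for any vertices $x,y$ with $d(x,y)=i$, exactly $c_i$ neighbours of $y$ are at distance $i-1$ from $x$ and exactly $b_i$ neighbours of $y$ are at distance $i+1$ from $x$; its valency is $k=b_0$. Let $\theta_D$ be the smallest eigenvalue of the adjacency matrix. A Delsarte clique is a clique with exactly $1+\frac{k}{-\theta_D}$ vertices. A non-complete distance-regular graph is geometric with respect to a set $\mathcal C$ of Delsarte cliques if every edge lies in exactly one member of $\mathcal C$; it is geometric if such $\mathcal C$ exists. For a vertex $x$ and a set $C$, $d(x,C)=\min_{y\in C}d(x,y)$. It is known that for a Delsarte clique $C$ and a vertex $x$ with $d(x,C)=1$, the number of vertices of $C$ adjacent to $x$ depends only on the intersection numbers of $\Gamma$; this number is denoted $\psi_1$. It is also known that if $\Gamma$ is geometric with respect to $\mathcal C$, then for vertices $x,y$ with $d(x,y)=2$ the number of cliques $C\in\mathcal C$ with $y\in C$ and $d(x,C)=1$ depends neither on the pair $x,y$ nor on the choice of $\mathcal C$; this number is denoted $\tau_2$. *)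

From HB Require Import structures.
From mathcomp Require Import all_boot all_order all_algebra.
Set Implicit Arguments. Unset Strict Implicit. Unset Printing Implicit Defensive.
Import Order.TTheory GRing.Theory Num.Theory.
Local Open Scope ring_scope.

Section Graph.
Variable n : nat.
Variable e : rel 'I_n.

Fixpoint ball (m : nat) (x : 'I_n) : {set 'I_n} :=
  match m with
  | 0 => [set x]
  | m'.+1 => ball m' x :|: [set z | [exists y in ball m' x, e y z]]
  end.

(* graph distance (for a connected graph on n vertices, every distance is < n,
   and this sum counts the radii i < n with y outside ball i x) *)
Definition gdist (x y : 'I_n) : nat := (\sum_(i < n) (y \notin ball i x))%N.

Definition diameter : nat := (\max_(x : 'I_n) \max_(y : 'I_n) gdist x y)%N.

(* d(x, C) = min_{y in C} d(x, y)  (n is a neutral upper bound) *)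
Definition dist_to_set (x : 'I_n) (C : {set 'I_n}) : nat :=
  \big[minn/n]_(y in C) gdist x y.

Definition is_drg (b c : nat -> nat) : Prop :=
  forall x y : 'I_n,
    #|[set z | e y z & gdist x z == (gdist x y).-1]| = c (gdist x y) /\
    #|[set z | e y z & gdist x z == (gdist x y).+1]| = b (gdist x y).

Definition adjmx (R : nzRingType) : 'M[R]_n := \matrix_(i, j) (e i j)%:R%R.

Definition smallest_eigenvalue (R : realFieldType) (th : R) : Prop :=
  eigenvalue (adjmx R) th /\ (forall a, eigenvalue (adjmx R) a -> (th <= a)%R).

Definition is_clique (C : {set 'I_n}) : Prop :=
  forall x y, x \in C -> y \in C -> x != y -> e x y.

Definition delsarte_clique (R : realFieldType) (th : R) (k : nat)
    (C : {set 'I_n}) : Prop :=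
  is_clique C /\ (#|C|%:R : R) = (1 + k%:R / (- th))%R.

Definition geometric_wrt (R : realFieldType) (th : R) (k : nat)
    (CC : {set {set 'I_n}}) : Prop :=
  (exists x y : 'I_n, x != y /\ ~~ e x y) /\
  (forall C, C \in CC -> delsarte_clique th k C) /\
  (forall x y, e x y -> #|[set C in CC | (x \in C) && (y \in C)]| = 1%N).

End Graph.

From mathcomp Require Import all_boot all_order all_algebra.
From mathcomp Require Import zify ring.
Set Implicit Arguments. Unset Strict Implicit. Unset Printing Implicit Defensive.
Import Order.TTheory GRing.Theory Num.Theory.

(* For an eigenvalue [th] of a distance-regular graph, the standard sequence
   [u_i] makes [z |-> u (d x z)] a [th]-eigenvector, and the sum of
   [u (d x z) * f z] over all [z] is a multiple of [f x] for every
   [th]-eigenvector [f]. For a Delsarte clique [C] the eigenvector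
   [h := fun x => \sum_(y in C) u (d y x)] vanishes on [C] by the choice of
   [#|C|], so [\sum_x h x ^ 2 = 0] and [h = 0]; evaluating [h] at a vertex at
   distance 1 from [C] shows that its number [psi_1] of neighbours in [C]
   only depends on [u_1], [u_2] and [#|C|].
   (i) For [d x y = 2], let [z] be a common neighbour and [C0] the clique of
   the geometry on [xz]. The [psi_1] neighbours [p] of [y] in [C0] are
   adjacent to [x], and the cliques on the edges [yp] are pairwise distinct
   and at distance 1 from [x].
   (ii) If the [c_2 >= 2] common neighbours [M] of [x] and [y] were pairwise
   adjacent, [M] would lie in the clique [P] on an edge [xz], [z \in M]: a
   vertex of [M] outside [P] would see [x] and [M :&: P], that is, more than
   [psi_1 = #|M :&: P|] vertices of [P]. But the clique [Q] on [yz] contains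
   at most one neighbour of [x], as two would span both [P] and [Q]; hence
   [c_2 = psi_1 <= 1]. *)

Section GraphDistance.
Variables (n : nat) (e : rel 'I_n).
Hypotheses (e_sym : symmetric e) (e_irr : irreflexive e).
Hypothesis e_conn : forall x y, connect e x y.
Local Notation d := (gdist e).

Lemma ball_mono i j x : i <= j -> ball e i x \subset ball e j x.
Proof.
move/subnKC <-; elim: (j - i) => [|k IH]; first by rewrite addn0.
by rewrite addnS /=; apply: subset_trans IH (subsetUl _ _).
Qed.

Lemma ball_adj i y z : e y z -> ball e i y \subset ball e i.+1 z.
Proof.
move=> eyz; elim: i => [|i IH] /=.
  apply/subsetP=> w; rewrite !inE => /eqP ->; apply/orP; right.
  by apply/existsP; exists z; rewrite inE eqxx e_sym.
apply: setUSS => //; apply/subsetP=> w; rewrite !inE => /existsP[v /andP[hv evw]].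
by apply/existsP; exists v; rewrite evw andbT (subsetP IH).
Qed.

Lemma mem_ballC i x y : (y \in ball e i x) = (x \in ball e i y).
Proof.
elim: i x y => [|i IH] x y; first by rewrite !inE eq_sym.
suff ball_symS x' y' : y' \in ball e i.+1 x' -> x' \in ball e i.+1 y'.
  by apply/idP/idP; apply: ball_symS.
rewrite /= inE => /orP[|].
  by rewrite IH => hx; rewrite /= inE hx.
rewrite inE => /existsP[z /andP[hz ezy']]; rewrite IH in hz.
exact: (subsetP (ball_adj i ezy')).
Qed.

Lemma gdistC x y : d x y = d y x.
Proof. by apply: eq_bigr => i _; rewrite mem_ballC. Qed.

Lemma mem_ball i x y : i < n -> (y \in ball e i x) = (d x y <= i).
Proof.
move=> lt_in; rewrite /gdist -(big_mkord xpredT (fun j => (y \notin ball e j x) : nat)).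
have [y_in|y_out] := boolP (y \in ball e i x); apply/esym.
  rewrite (big_cat_nat (leq0n i) (ltnW lt_in)) /= [X in _ + X]big_nat_cond.
  rewrite [X in _ + X]big1 ?addn0; last first.
    by move=> j /andP[/andP[le_ij _] _]; rewrite (subsetP (ball_mono x le_ij)).
  apply: (@leq_trans (\sum_(0 <= j < i) 1)); first by apply: leq_sum => j _; exact: leq_b1.
  by rewrite sum_nat_const_nat subn0 muln1.
apply/negbTE; rewrite -ltnNge (big_cat_nat (leq0n i.+1) lt_in) /=.
apply: leq_trans (leq_addr _ _).
rewrite -[X in X <= _](subn0 i.+1) -(muln1 (i.+1 - 0)) -sum_nat_const_nat.
rewrite [X in X <= _]big_nat_cond [X in _ <= X]big_nat_cond.
apply: leq_sum => j /andP[/andP[_ le_ji] _].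
have [y_inj|//] := boolP (y \in ball e j x).
by move: y_out; rewrite (subsetP (ball_mono x (le_ji : j <= i)) _ y_inj).
Qed.

Lemma last_path_ball x p z i : z \in ball e i x -> path e z p ->
  last z p \in ball e (i + size p) x.
Proof.
elim: p z i => [|v p IH] z i hz /=; first by rewrite addn0.
case/andP=> ezv hp; rewrite -addSnnS; apply: IH hp.
by rewrite /= !inE; apply/orP; right; apply/existsP; exists z; rewrite hz ezv.
Qed.

(* A shortest path visits at most [n] vertices. *)
Lemma gdist_lt x y : d x y < n.
Proof.
have n_gt0 : 0 < n := leq_ltn_trans (leq0n x) (ltn_ord x).
have lt_pn : n.-1 < n by rewrite prednK.
suff : y \in ball e n.-1 x by rewrite (mem_ball _ _ lt_pn) => /leq_ltn_trans; apply.
case/connectP: (e_conn x y) => p /shortenP[p' hp' uniq_p' _] ->.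
apply: (subsetP (ball_mono _ _)) (last_path_ball (i := 0) _ hp'); rewrite ?inE ?lt_pn //.
have := max_card (mem (x :: p')); rewrite (card_uniqP uniq_p') card_ord /=; lia.
Qed.

Lemma gdist_eq0 x y : (d x y == 0) = (y == x).
Proof. by rewrite -leqn0 -mem_ball ?inE // (leq_ltn_trans _ (gdist_lt x y)). Qed.

Lemma gdistxx x : d x x = 0.
Proof. by apply/eqP; rewrite gdist_eq0. Qed.

Lemma gdist_le_adj x y z : e y z -> d x z <= (d x y).+1.
Proof.
move=> eyz; rewrite gdistC (gdistC x y).
have [lt_dn|le_nd] := ltnP (d y x).+1 n.
  by rewrite -mem_ball // (subsetP (ball_adj _ eyz)) // mem_ball // ltnW.
exact/ltnW/(leq_trans (gdist_lt _ _)).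
Qed.

Lemma gdist_pred_nbr x y m : d x y = m.+1 -> exists2 z, e z y & d x z = m.
Proof.
move=> dxy; have lt_mn : m.+1 < n by rewrite -dxy gdist_lt.
have : y \in ball e m.+1 x by rewrite mem_ball // dxy.
rewrite /= inE mem_ball ?dxy ?ltnn ?(ltnW lt_mn) //= inE.
case/existsP=> z /andP[hz ezy]; exists z => //; apply/eqP.
rewrite eqn_leq -mem_ball ?(ltnW lt_mn) // hz -ltnS -dxy.
exact: gdist_le_adj.
Qed.

Lemma gdist_eq1 x y : (d x y == 1) = e x y.
Proof.
apply/eqP/idP => [/gdist_pred_nbr[z ezy /eqP]|exy]; first by rewrite gdist_eq0 => /eqP<-.
have := gdist_le_adj x exy; rewrite gdistxx.
have : d x y != 0 by rewrite gdist_eq0; apply: contraTneq exy => ->; rewrite e_irr.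
lia.
Qed.

Lemma gdist_le_diameter x y : d x y <= diameter e.
Proof. exact: leq_trans (leq_bigmax (F := fun y => d x y) y) (leq_bigmax x). Qed.

Lemma gdist_intermediate x y i : i <= d x y -> exists z, d x z = i.
Proof.
move dxy: (d x y) => m; elim: m y dxy => [|m IH] y dxy le_im.
  by exists y; lia.
have [le_i_m|lt_mi] := leqP i m; last by exists y; lia.
by have [z _ dxz] := gdist_pred_nbr dxy; exact: IH dxz le_i_m.
Qed.

Lemma diameter_attained i : 0 < n -> i <= diameter e -> exists x y, d x y = i.
Proof.
move=> n_gt0; have card_gt0 : 0 < #|'I_n| by rewrite card_ord.
rewrite /diameter; have [x ->] := @bigop.eq_bigmax _ (fun x => \max_y d x y) card_gt0.
have [y ->] := @bigop.eq_bigmax _ (fun y => d x y) card_gt0.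
by move/gdist_intermediate => [z dxz]; exists x, z.
Qed.

Lemma bigmin_leq (C : {set 'I_n}) (F : 'I_n -> nat) m y :
  y \in C -> \big[minn/m]_(z in C) F z <= F y.
Proof.
rewrite -big_filter => yC.
have : y \in [seq z <- index_enum 'I_n | z \in C] by rewrite mem_filter yC mem_index_enum.
elim: [seq _ <- _ | _] => [//|z r IH]; rewrite inE big_cons => /orP[/eqP<-|yr].
  exact: geq_minl.
exact: leq_trans (geq_minr _ _) (IH yr).
Qed.

(* [1 < n] is needed: the empty set is at distance [n] from every vertex. *)
Lemma dist_to_set1_nbr x C : 1 < n -> dist_to_set e x C = 1 ->
  x \notin C /\ exists2 z, z \in C & e x z.
Proof.
rewrite /dist_to_set => n_gt1 dxC; split.
  by apply/negP=> xC; have := bigmin_leq (gdist e x) n xC; rewrite dxC gdistxx.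
have : \big[minn/n]_(z in C) d x z = n \/
    exists2 z, z \in C & d x z = \big[minn/n]_(z in C) d x z.
  apply: (big_ind (fun m => m = n \/ exists2 z, z \in C & d x z = m)) => //.
  - by left.
  - by move=> m m' hm hm'; rewrite /minn; case: ifP.
  - by move=> z zC; right; exists z.
rewrite dxC => -[n1|[z zC /eqP]]; first by rewrite n1 ltnn in n_gt1.
by rewrite gdist_eq1; exists z.
Qed.

Lemma dist_to_set1 x (C : {set 'I_n}) z :
  x \notin C -> z \in C -> e x z -> dist_to_set e x C = 1.
Proof.
move=> xC zC exz; apply/eqP; rewrite eqn_leq; apply/andP; split.
  by rewrite -(eqP (_ : d x z == 1)) ?gdist_eq1 // bigmin_leq.
apply: (big_ind (fun m => 1 <= m)).
- exact: leq_ltn_trans (leq0n z) (ltn_ord z).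
- by move=> m m' h h'; rewrite leq_min h h'.
- by move=> y yC; rewrite lt0n gdist_eq0; apply: contraNneq xC => <-.
Qed.

Lemma clique_gdist_le2 x y z (C : {set 'I_n}) : is_clique e C ->
  z \in C -> e x z -> y \in C -> d x y <= 2.
Proof.
move=> cliqueC zC exz yC; have dxz : d x z = 1 by apply/eqP; rewrite gdist_eq1.
have [->|yz] := eqVneq y z; first by rewrite dxz.
by rewrite -dxz; apply/gdist_le_adj/cliqueC; rewrite // eq_sym.
Qed.

Lemma clique_adj x y z (C : {set 'I_n}) : is_clique e C ->
  x \in C -> z \in C -> e y z -> ~~ e y x -> e x z.
Proof.
move=> cliqueC xC zC eyz neyx; apply: cliqueC => //.
by apply: contraNneq neyx => ->.
Qed.

Lemma clique_gdist2_notin x y (C : {set 'I_n}) : is_clique e C ->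
  d x y = 2 -> x \in C -> y \notin C.
Proof.
move=> cliqueC dxy xC; apply/negP => yC.
have : e x y by apply: cliqueC; rewrite // eq_sym -gdist_eq0 dxy.
by rewrite -gdist_eq1 dxy.
Qed.

End GraphDistance.

Section IndicatorSums.
Local Open Scope ring_scope.
Variables (R : nzRingType) (n : nat).

Lemma sumr_const_card (P : pred 'I_n) (a : R) :
  \sum_(z | P z) a = #|[set z | P z]|%:R * a.
Proof. by rewrite mulr_natl -sumr_const; apply: eq_bigl => z; rewrite inE. Qed.

Lemma sumr_indicator (P Q : pred 'I_n) :
  \sum_(z | P z) ((Q z : nat)%:R : R) = #|[set z | P z & Q z]|%:R.
Proof.
rewrite -[RHS]mulr1 -sumr_const_card big_mkcondr /=.
by apply: eq_bigr => z _; case: (Q z).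
Qed.

Lemma eq_near_sum (F : nat -> R) i g :
  (0 < i)%N -> (i <= g.+1)%N -> (g <= i.+1)%N ->
  F g = (g == i.-1)%:R * F i.-1 + (g == i)%:R * F i + (g == i.+1)%:R * F i.+1.
Proof.
case: i => // i _ /=; rewrite !ltnS => le_ig le_gi.
have : g = i \/ g = i.+1 \/ g = i.+2 by lia.
by case=> [|[|]] ->; rewrite !eqxx; do ![rewrite (_ : (_ == _) = false); last by lia];
  rewrite !(mul1r, mul0r, addr0, add0r).
Qed.

End IndicatorSums.

Section DistanceRegular.
Variables (n : nat) (e : rel 'I_n) (b c : nat -> nat).
Hypotheses (e_sym : symmetric e) (e_irr : irreflexive e).
Hypothesis e_conn : forall x y, connect e x y.
Hypothesis drg : is_drg e b c.
Hypothesis n_gt0 : 0 < n.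
Local Notation d := (gdist e).
Local Notation D := (diameter e).

Lemma drg_c0 : c 0 = 0.
Proof.
pose x : 'I_n := Ordinal n_gt0; have [] := drg x x; rewrite gdistxx // => <- _.
apply/eqP; rewrite cards_eq0; apply/eqP/setP => z; rewrite !inE gdist_eq0 //.
by apply/negP => /andP[exz /eqP zx]; rewrite zx e_irr in exz.
Qed.

Lemma card_nbrs y : #|[set z | e y z]| = b 0.
Proof.
have [] := drg y y; rewrite gdistxx // => _ <-; apply: eq_card => z.
by rewrite !inE gdist_eq1 // andbb.
Qed.

Lemma drg_c_gt0 i : 0 < i -> i <= D -> 0 < c i.
Proof.
case: i => // i _ /(diameter_attained e_sym e_conn n_gt0) [x [y dxy]].
have [z ezy dxz] := gdist_pred_nbr e_sym e_conn dxy.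
have [] := drg x y; rewrite dxy => <- _; apply/card_gt0P; exists z.
by rewrite !inE e_sym ezy dxz /=.
Qed.

Lemma drg_b_gt0 i : i < D -> 0 < b i.
Proof.
move/(diameter_attained e_sym e_conn n_gt0) => [x [y dxy]].
have [z ezy dxz] := gdist_pred_nbr e_sym e_conn dxy.
have [] := drg x z; rewrite dxz => _ <-; apply/card_gt0P; exists y.
by rewrite !inE ezy dxy /=.
Qed.

Lemma drg_b_diameter : b D = 0.
Proof.
have [x [y dxy]] := diameter_attained e_sym e_conn n_gt0 (leqnn D).
have [] := drg x y; rewrite dxy => _ <-; apply/eqP; rewrite cards_eq0.
apply/eqP/setP => z.
rewrite !inE; apply/negP => /andP[_ /eqP dxz].
by have := gdist_le_diameter e x z; rewrite dxz ltnn.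
Qed.

Variable R : realFieldType.
Local Open Scope ring_scope.
Local Notation kR := ((b 0)%:R : R).
Local Notation bR i := ((b i)%:R : R).
Local Notation cR i := ((c i)%:R : R).
Local Notation aR i := (kR - bR i - cR i).

Lemma drg_a0 : aR 0 = 0.
Proof. by rewrite drg_c0 subrr subr0. Qed.

Lemma drg_cR_neq0 i : (0 < i <= D)%N -> cR i != 0.
Proof. by case/andP=> i_gt0 le_iD; rewrite pnatr_eq0 -lt0n drg_c_gt0. Qed.

Lemma drg_kR_neq0 : (0 < D)%N -> kR != 0.
Proof. by move=> D_gt0; rewrite pnatr_eq0 -lt0n drg_b_gt0. Qed.

Lemma drg_nbr_sum (F : nat -> R) x y :
  \sum_(z | e y z) F (d x z) =
    cR (d x y) * F (d x y).-1 + aR (d x y) * F (d x y) + bR (d x y) * F (d x y).+1.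
Proof.
have [cxy bxy] := drg x y; set i := d x y in cxy bxy *.
have card_at j : \sum_(z | e y z) ((d x z == j : nat)%:R : R) =
    #|[set z | e y z & d x z == j]|%:R := sumr_indicator _ _ _.
have [i0|i_gt0] := posnP i.
  have yx : y = x by apply/eqP; rewrite -(gdist_eq0 e_conn) -/i i0.
  rewrite (eq_bigr (fun z => (d x z == i.+1)%:R * F i.+1)); last first.
    by move=> z eyz; rewrite i0 (eqP (_ : d x z == 1)) ?gdist_eq1 -?yx // mul1r.
  by rewrite -mulr_suml card_at bxy i0 drg_a0 drg_c0 !mul0r !add0r.
have sum_split G : \sum_(z | e y z) G (d x z) =
    cR i * G i.-1 + #|[set z | e y z & d x z == i]|%:R * G i + bR i * G i.+1.
  rewrite (eq_bigr (fun z => (d x z == i.-1)%:R * G i.-1 + (d x z == i)%:R * G i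
      + (d x z == i.+1)%:R * G i.+1)); last first.
    move=> z eyz; apply: eq_near_sum => //.
      by rewrite -/i e_sym in eyz; exact: gdist_le_adj eyz.
    exact: gdist_le_adj eyz.
  by rewrite !big_split /= -!mulr_suml !card_at cxy bxy.
rewrite sum_split; set N := #|_|%:R.
have := sum_split (fun _ => 1); rewrite /= !mulr1 sumr_const_card mulr1 card_nbrs -/N.
by move->; ring.
Qed.

Definition sphere_sum (f : 'I_n -> R) x i := \sum_(z | d x z == i) f z.

Definition is_eigfun (f : 'I_n -> R) (t : R) :=
  forall y, \sum_(z | e y z) f z = t * f y.

Lemma sphere_sumE f x i : sphere_sum f x i = \sum_z f z * (d x z == i)%:R.
Proof.
rewrite /sphere_sum big_mkcond; apply: eq_bigr => z _.
by case: (d x z == i); rewrite ?mulr1n ?mulr0n ?mulr1 ?mulr0.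
Qed.

Lemma sphere_sum0 f x : sphere_sum f x 0 = f x.
Proof. by rewrite /sphere_sum (big_pred1 x) // => z; rewrite /= gdist_eq0. Qed.

Lemma sphere_sum_gt_diameter f x : sphere_sum f x D.+1 = 0.
Proof.
rewrite /sphere_sum big_pred0 // => z; apply/negbTE/eqP => dxz.
by have := gdist_le_diameter e x z; rewrite dxz ltnn.
Qed.

(* Summing [f] over the neighbours of each vertex of the [i]-th sphere counts
   each vertex of the spheres [i - 1], [i], [i + 1] with weight [b], [a], [c]. *)
Lemma sphere_sum_adj f x i :
  \sum_(y | d x y == i) \sum_(z | e y z) f z =
    cR i.+1 * sphere_sum f x i.+1 + aR i * sphere_sum f x i
    + (if i is j.+1 then bR j * sphere_sum f x j else 0).
Proof.
rewrite (exchange_big_dep xpredT) //=.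
transitivity (\sum_z f z * \sum_(y | e z y) ((d x y == i)%:R : R)).
  apply: eq_bigr => z _; rewrite sumr_const_card sumr_indicator mulrC.
  by congr (_ * _%:R); apply: eq_card => y; rewrite !inE e_sym andbC.
have -> : (if i is j.+1 then bR j * sphere_sum f x j else 0) =
    \sum_z f z * (bR (d x z) * ((d x z).+1 == i)%:R).
  case: i => [|j]; first by rewrite big1 // => z _; rewrite mulr0 mulr0.
  rewrite sphere_sumE mulr_sumr; apply: eq_bigr => z _; rewrite eqSS.
  by case: eqP => [->|_]; rewrite ?mulr0 ?mulr1 // mulrC.
rewrite !sphere_sumE !mulr_sumr -!big_split /=; apply: eq_bigr => z _.
rewrite (drg_nbr_sum (fun j => (j == i)%:R)) /=; move: (d x z) => g.
have -> : cR g * (g.-1 == i)%:R = cR i.+1 * (g == i.+1)%:R.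
  case: g => [|g] /=; first by rewrite drg_c0 mul0r mulr0.
  by rewrite eqSS; case: eqP => [->|_]; rewrite ?mulr0.
have -> : aR g * (g == i)%:R = aR i * (g == i)%:R.
  by case: eqP => [->|_]; rewrite ?mulr0n ?mulr0.
by rewrite !mulrDr !mulrA ![f z * _]mulrC -!mulrA.
Qed.

(* [vseq t i] is the polynomial [v_i] of Brouwer-Cohen-Neumaier evaluated at
   [t]: the sum of an eigenvector over the [i]-th sphere is [v_i(t)] times its
   value at the centre (see [sphere_sum_eigfun]). *)
Fixpoint vseq (t : R) (i : nat) : R :=
  match i with
  | 0 => 1
  | 1 => (t - aR 0) / cR 1
  | S (S j as i) => ((t - aR i) * vseq t i - bR j * vseq t j) / cR i.+1
  end.
Arguments vseq : simpl never.

Lemma vseq1 t : vseq t 1 = (t - aR 0) / cR 1.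
Proof. by []. Qed.

Lemma vseqSS t i :
  vseq t i.+2 = ((t - aR i.+1) * vseq t i.+1 - bR i * vseq t i) / cR i.+2.
Proof. by []. Qed.

Definition drg_recurrence (t : R) (s : nat -> R) :=
  forall i, (i < D)%N ->
    cR i.+1 * s i.+1 = (t - aR i) * s i - (if i is j.+1 then bR j * s j else 0).

Lemma vseq_recurrence t : drg_recurrence t (vseq t).
Proof.
move=> i lt_iD; rewrite mulrC; case: i lt_iD => [|i] lt_iD.
  by rewrite vseq1 divfK ?drg_cR_neq0 // mulr1 subr0.
by rewrite vseqSS divfK // drg_cR_neq0.
Qed.

Lemma drg_recurrence_uniq t s s' :
  drg_recurrence t s -> drg_recurrence t s' -> s 0 = s' 0 ->
  forall i, (i <= D)%N -> s i = s' i.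
Proof.
move=> rec_s rec_s' eq0.
suff eq2 i : (i <= D)%N -> s i = s' i /\ s i.-1 = s' i.-1 by move=> i /eq2[].
elim: i => [|i IH] lt_iD; first by [].
have [eq_i eq_pi] := IH (ltnW lt_iD); split => //.
apply: (mulfI (drg_cR_neq0 _ : cR i.+1 != 0)); first by rewrite lt_iD.
by rewrite rec_s // rec_s' // eq_i; case: i {IH lt_iD eq_i} eq_pi => [|j] //= ->.
Qed.

Lemma sphere_sum_rec f t x i : is_eigfun f t ->
  cR i.+1 * sphere_sum f x i.+1 =
    (t - aR i) * sphere_sum f x i - (if i is j.+1 then bR j * sphere_sum f x j else 0).
Proof.
move=> eig_f; have := sphere_sum_adj f x i.
rewrite (eq_bigr (fun y => t * f y)) => [|y _]; last exact: eig_f.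
rewrite -mulr_sumr -/(sphere_sum f x i) => adj_i.
by rewrite mulrBl adj_i; case: i {adj_i} => [|j] /=; ring.
Qed.

Lemma sphere_sum_eigfun f t x i :
  is_eigfun f t -> (i <= D)%N -> sphere_sum f x i = vseq t i * f x.
Proof.
move=> eig_f; apply: (@drg_recurrence_uniq t _ (fun i => vseq t i * f x)).
- by move=> j _; exact: sphere_sum_rec.
- move=> j lt_jD /=; rewrite mulrA vseq_recurrence //.
  by case: j {lt_jD} => [|j]; ring.
- by rewrite sphere_sum0 mul1r.
Qed.

Lemma eigfun_vseq_end f t x : is_eigfun f t -> f x != 0 -> (0 < D)%N ->
  (t - aR D) * vseq t D = bR D.-1 * vseq t D.-1.
Proof.
move=> eig_f fx_neq0 D_gt0; apply: (mulIf fx_neq0).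
have := sphere_sum_rec x D eig_f; rewrite sphere_sum_gt_diameter mulr0.
rewrite (sphere_sum_eigfun x eig_f (leqnn D)).
have := sphere_sum_eigfun x eig_f (leq_pred D).
move: D_gt0; case: (diameter e) => [//|D'] /= _ -> /eqP.
by rewrite eq_sym subr_eq0 -!mulrA => /eqP ->.
Qed.

Lemma eigenvalue_eigfun t : eigenvalue (adjmx e R) t ->
  exists f x, is_eigfun f t /\ f x != 0.
Proof.
case/eigenvalueP => v eig_v v_neq0; exists (fun j => v 0 j).
have [j vj_neq0] : exists j, v 0 j != 0.
  apply/existsP; apply: contraR v_neq0 => /existsPn v0.
  by apply/eqP/rowP => j; rewrite mxE; apply/eqP; move: (v0 j); rewrite negbK.
exists j; split => // y; have := congr1 (fun M : 'M[R]_(1, n) => M 0 y) eig_v.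
rewrite !mxE => <-; rewrite big_mkcond; apply: eq_bigr => z _.
by rewrite /adjmx mxE (e_sym y z); case: (e z y); rewrite ?mulr1 ?mulr0.
Qed.

Definition sphere_size i := vseq kR i.

Lemma const_eigfun : is_eigfun (fun _ => 1) kR.
Proof. by move=> y; rewrite sumr_const_card mulr1 card_nbrs mulr1. Qed.

Lemma sphere_size_gt0 i : (i <= D)%N -> 0 < sphere_size i.
Proof.
move=> le_iD; have [x [z dxz]] := diameter_attained e_sym e_conn n_gt0 le_iD.
rewrite /sphere_size -[vseq _ _]mulr1 -(sphere_sum_eigfun x const_eigfun le_iD).
rewrite /sphere_sum sumr_const_card mulr1 ltr0n.
by apply/card_gt0P; exists z; rewrite inE dxz.
Qed.

Lemma sphere_size_neq0 i : (i <= D)%N -> sphere_size i != 0.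
Proof. by move/sphere_size_gt0; rewrite lt0r => /andP[]. Qed.

Lemma sphere_size_rec i : (i < D)%N -> cR i.+1 * sphere_size i.+1 = bR i * sphere_size i.
Proof.
elim: i => [|i IH] lt_iD; rewrite /sphere_size vseq_recurrence //.
  by rewrite drg_a0 !subr0 mulr1.
by rewrite -!/(sphere_size _) mulrBl -IH ?(ltnW lt_iD) //; ring.
Qed.

Section Cosines.
Variable th : R.
Hypothesis th_eig : eigenvalue (adjmx e R) th.
Hypothesis D_gt0 : (0 < D)%N.

Lemma th_vseq_end : (th - aR D) * vseq th D = bR D.-1 * vseq th D.-1.
Proof.
have [f [x [eig_f fx_neq0]]] := eigenvalue_eigfun th_eig.
exact: eigfun_vseq_end eig_f fx_neq0 D_gt0.
Qed.

Definition cosine i := vseq th i / sphere_size i.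

Lemma cosine0 : cosine 0 = 1.
Proof. by rewrite /cosine /sphere_size divr1. Qed.

Lemma cosine1 : cosine 1 = th / kR.
Proof.
have c1_neq0 : cR 1 != 0 by rewrite drg_cR_neq0.
rewrite /cosine /sphere_size !vseq1 drg_a0 !subr0; field.
by rewrite c1_neq0 drg_kR_neq0.
Qed.

Lemma cosine_rec i : (i <= D)%N ->
  cR i * cosine i.-1 + aR i * cosine i + bR i * cosine i.+1 = th * cosine i.
Proof.
case: i => [_|i le_iD].
  rewrite drg_a0 drg_c0 cosine0 cosine1 !mul0r !add0r mulr1 mulrC divfK //.
  exact: drg_kR_neq0.
have ki_neq0 := sphere_size_neq0 (ltnW le_iD); have kSi_neq0 := sphere_size_neq0 le_iD.
have e_c : cR i.+1 = bR i * sphere_size i / sphere_size i.+1.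
  by apply: (mulIf kSi_neq0); rewrite divfK // sphere_size_rec.
rewrite /cosine /=; have [lt_iD|] := ltnP i.+1 D.
  have kSSi_neq0 := sphere_size_neq0 lt_iD.
  have cSSi_neq0 : cR i.+2 != 0 by rewrite drg_cR_neq0 ?lt_iD.
  have e_b : bR i.+1 = cR i.+2 * sphere_size i.+2 / sphere_size i.+1.
    by apply: (mulIf kSi_neq0); rewrite divfK // sphere_size_rec.
  rewrite vseqSS e_c e_b; field.
  by rewrite kSSi_neq0 kSi_neq0 cSSi_neq0 ki_neq0.
rewrite leq_eqVlt ltnNge le_iD orbF => /eqP eq_iD.
have bSi0 : bR i.+1 = 0 by rewrite -eq_iD drg_b_diameter.
have := th_vseq_end; rewrite eq_iD /= => end_eq.
have bi_neq0 : bR i != 0 by rewrite pnatr_eq0 -lt0n drg_b_gt0 // -eq_iD.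
rewrite bSi0 in end_eq; rewrite bSi0 mul0r addr0 e_c.
rewrite -[vseq th i](mulKf bi_neq0) -end_eq e_c; field.
by rewrite kSi_neq0 bi_neq0 ki_neq0.
Qed.

Lemma cosine_eigfun x : is_eigfun (fun z => cosine (d x z)) th.
Proof. by move=> y; rewrite drg_nbr_sum cosine_rec // gdist_le_diameter. Qed.

(* This is [n / m], [m] the multiplicity of [th]; its value plays no role. *)
Definition cosine_norm := \sum_(i < D.+1) cosine i * vseq th i.

Lemma cosine_sum_eigfun f x :
  is_eigfun f th -> \sum_z cosine (d x z) * f z = cosine_norm * f x.
Proof.
move=> eig_f; pose sphere z := Ordinal (gdist_le_diameter e x z : (d x z < D.+1)%N).
rewrite (partition_big sphere xpredT) //= /cosine_norm mulr_suml.
apply: eq_bigr => i _; rewrite -mulrA -(sphere_sum_eigfun x eig_f (ltn_ord i)).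
rewrite /sphere_sum mulr_sumr; apply: eq_big => [z|z /eqP <-] //.
Qed.

Hypothesis th_neq0 : th != 0.

Lemma delsarte_cosine_sum C : is_clique e C -> #|C|%:R = 1 + kR / (- th) ->
  forall x, \sum_(y in C) cosine (d y x) = 0.
Proof.
move=> cliqueC card_C.
pose h x := \sum_(y in C) cosine (d y x).
have eig_h : is_eigfun h th.
  move=> x; rewrite /h exchange_big mulr_sumr; apply: eq_bigr => y _.
  exact: cosine_eigfun.
(* [h] vanishes on [C] by the choice of [#|C|] ... *)
have h_C y : y \in C -> h y = 0.
  move=> yC; rewrite /h (bigD1 y) //= gdistxx // cosine0.
  rewrite (eq_bigr (fun _ => cosine 1)) => [|z /andP[zC zy]]; last first.
    by congr cosine; apply/eqP; rewrite gdist_eq1 // cliqueC.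
  rewrite sumr_const_card cosine1.
  have -> : #|[set z | (z \in C) && (z != y)]|%:R = #|C|%:R - 1 :> R.
    have -> : [set z | (z \in C) && (z != y)] = C :\ y.
      by apply/setP => z; rewrite !inE andbC.
    by rewrite [in RHS](cardsD1 y C) yC natrD addrC addKr.
  rewrite card_C; field.
  by rewrite th_neq0 drg_kR_neq0.
(* ... hence its squared norm [cosine_norm * \sum_(y in C) h y] vanishes. *)
have norm_h : \sum_x h x ^+ 2 = 0.
  transitivity (\sum_(y in C) \sum_x cosine (d y x) * h x).
    by rewrite exchange_big; apply: eq_bigr => x _; rewrite expr2 mulr_suml.
  by apply: big1 => y yC; rewrite cosine_sum_eigfun // h_C // mulr0.
move=> x; apply/eqP; rewrite -sqrf_eq0; apply/eqP.
exact: (psumr_eq0P (fun x _ => sqr_ge0 (h x)) norm_h) x isT.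
Qed.

Definition psi1 : R := - (1 + kR / (- th)) * cosine 2 / (cosine 1 - cosine 2).

Lemma delsarte_card_nbrs C x : (1 < n)%N ->
  delsarte_clique e th (b 0) C -> dist_to_set e x C = 1%N ->
  #|[set y in C | e x y]|%:R = psi1.
Proof.
move=> n_gt1 [cliqueC card_C] /(dist_to_set1_nbr e_sym e_irr e_conn n_gt1).
case=> xC [z zC exz]; set N := #|[set y in C | e x y]|%:R.
have card_nonnbrs : #|[set y in C | ~~ e x y]|%:R = #|C|%:R - N :> R.
  rewrite -(cardsID [set y | e x y] C) natrD /N.
  have -> : [set y in C | e x y] = C :&: [set y | e x y] by apply/setP => y; rewrite !inE.
  have -> : [set y in C | ~~ e x y] = C :\: [set y | e x y].
    by apply/setP => y; rewrite !inE andbC.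
  by rewrite addrAC subrr add0r.
have : N * cosine 1 + (#|C|%:R - N) * cosine 2 = 0.
  rewrite -(delsarte_cosine_sum cliqueC card_C x) (bigID (e x)) /=.
  rewrite (eq_bigr (fun _ => cosine 1)) => [|y /andP[_ exy]]; last first.
    by congr cosine; apply/eqP; rewrite gdistC // gdist_eq1.
  rewrite [X in _ = _ + X](eq_bigr (fun _ => cosine 2)) => [|y /andP[yC nexy]]; last first.
    have le2 := clique_gdist_le2 e_sym e_irr e_conn cliqueC zC exz yC.
    have ne1 : d x y != 1%N by rewrite gdist_eq1.
    have ne0 : d x y != 0%N by rewrite gdist_eq0 //; apply: contraNneq xC => <-.
    rewrite gdistC // (_ : d x y = 2%N) //; apply/eqP; rewrite eqn_leq le2 /=.
    by move: ne0 ne1; case: (d x y) => [|[|m]].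
  by rewrite !sumr_const_card card_nonnbrs.
move=> sum_eq; have cos12 : cosine 1 - cosine 2 != 0.
  apply: contraNneq th_neq0 => /eqP; rewrite subr_eq0 => /eqP cos12.
  have : #|C|%:R * cosine 1 = 0 by rewrite -sum_eq cos12; ring.
  rewrite cosine1 => /eqP; rewrite !mulf_eq0 invr_eq0 (negbTE (drg_kR_neq0 D_gt0)) orbF.
  by rewrite pnatr_eq0 cards_eq0 orbC => /orP[/eqP //|/eqP C0]; rewrite C0 inE in zC.
apply: (mulIf cos12); rewrite /psi1 divfK //.
rewrite -card_C; set Cn := #|C|%:R.
have -> : - Cn * cosine 2 =
    N * (cosine 1 - cosine 2) - (N * cosine 1 + (Cn - N) * cosine 2) by ring.
by rewrite sum_eq subr0.
Qed.

Lemma delsarte_psi1_const : (1 < n)%N -> forall C x C' x',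
  delsarte_clique e th (b 0) C -> dist_to_set e x C = 1%N ->
  delsarte_clique e th (b 0) C' -> dist_to_set e x' C' = 1%N ->
  #|[set y in C | e x y]| = #|[set y in C' | e x' y]|.
Proof.
move=> n_gt1 C x C' x' delC dxC delC' dxC'; apply/eqP; rewrite -(eqr_nat R).
by rewrite !delsarte_card_nbrs.
Qed.

End Cosines.
End DistanceRegular.

Lemma geometric_card_gt1 n (e : rel 'I_n) (R : realFieldType) (th : R) k CC :
  geometric_wrt e th k CC -> 1 < n.
Proof.
case=> -[x [y [neq_xy _]]] _; rewrite -[n]card_ord.
by apply/card_gt1P; exists x, y.
Qed.

Section Geometric.
Variables (n : nat) (e : rel 'I_n) (R : realFieldType) (th : R) (k : nat).
Variable CC : {set {set 'I_n}}.
Hypotheses (e_sym : symmetric e) (e_irr : irreflexive e).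
Hypothesis e_conn : forall x y, connect e x y.
Hypothesis geo : geometric_wrt e th k CC.
Hypothesis psi1_const : forall C x C' x',
  delsarte_clique e th k C -> dist_to_set e x C = 1 ->
  delsarte_clique e th k C' -> dist_to_set e x' C' = 1 ->
  #|[set y in C | e x y]| = #|[set y in C' | e x' y]|.
Local Notation d := (gdist e).

Lemma geometric_delsarte C : C \in CC -> delsarte_clique e th k C.
Proof. by case: geo => _ [delCC _]; exact: delCC. Qed.

Lemma geometric_clique C : C \in CC -> is_clique e C.
Proof. by case/geometric_delsarte. Qed.

(* Junk ([set0]) unless [p] and [q] are adjacent. *)
Definition edge_clique p q := odflt set0 [pick C in CC | (p \in C) && (q \in C)].

Lemma edge_cliqueP p q : e p q ->
  [/\ edge_clique p q \in CC, p \in edge_clique p q & q \in edge_clique p q].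
Proof.
case: geo => _ [_ uniqCC] epq; rewrite /edge_clique; case: pickP => [C|none] /=.
  by case/andP=> CC_C /andP[].
have /eqP/cards1P[C defC] := uniqCC _ _ epq.
by have := none C; have := set11 C; rewrite -defC inE => ->.
Qed.

Lemma edge_clique_uniq p q C : e p q ->
  C \in CC -> p \in C -> q \in C -> C = edge_clique p q.
Proof.
case: geo => _ [_ uniqCC] epq CC_C pC qC.
have [CC_pq p_pq q_pq] := edge_cliqueP epq.
have /eqP/cards1P[C0 defC0] := uniqCC _ _ epq.
have mem_C0 C' : C' \in CC -> p \in C' -> q \in C' -> C' = C0.
  by move=> ? ? ?; apply/set1P; rewrite -defC0 !inE; apply/and3P.
by rewrite (mem_C0 C) // (mem_C0 (edge_clique p q)).
Qed.

(* With [th = 0] the size [1 + k / (- th)] of a Delsarte clique degenerates to [1],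
   as [x / 0 = 0]; but every edge lies in a clique of [CC]. *)
Lemma geometric_eigenvalue_neq0 : 0 < n -> 0 < diameter e -> (th != 0)%R.
Proof.
move=> n_gt0 /(diameter_attained e_sym e_conn n_gt0) [x [y /eqP]].
rewrite gdist_eq1 // => exy; have [CC_C xC yC] := edge_cliqueP exy.
have [_ card_C] := geometric_delsarte CC_C.
have card_gt1 : 1 < #|edge_clique x y|.
  by apply/card_gt1P; exists x, y; split => //; apply: contraTneq exy => ->; rewrite e_irr.
apply: contraTneq card_gt1 => th0; move: card_C; rewrite th0 oppr0 invr0 mulr0 addr0.
by move/eqP; rewrite pnatr_eq1 => /eqP ->.
Qed.

Lemma dist2_nbr_geometric x y z :
  d x y = 2 -> e x z -> e y z ->
  [/\ edge_clique x z \in CC, x \in edge_clique x z, z \in edge_clique x z,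
      y \notin edge_clique x z & dist_to_set e y (edge_clique x z) = 1].
Proof.
move=> dxy exz eyz; have [CC_C xC zC] := edge_cliqueP exz.
have yC : y \notin edge_clique x z.
  exact: (clique_gdist2_notin e_sym e_irr e_conn (geometric_clique CC_C) dxy xC).
by split => //; exact: dist_to_set1 yC zC eyz.
Qed.

Lemma tau2_ge_psi1 x y C x' : d x y = 2 ->
  delsarte_clique e th k C -> dist_to_set e x' C = 1 ->
  #|[set z in C | e x' z]| <=
    #|[set C0 in CC | (y \in C0) && (dist_to_set e x C0 == 1)]|.
Proof.
move=> dxy delC dx'C; have [z ezy dxz] := gdist_pred_nbr e_sym e_conn dxy.
have exz : e x z by rewrite -gdist_eq1 // dxz.
have eyz : e y z by rewrite e_sym.
have [CC_C0 xC0 _ yC0 dyC0] := dist2_nbr_geometric dxy exz eyz.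
rewrite (psi1_const delC dx'C (geometric_delsarte CC_C0) dyC0).
set C0 := edge_clique x z; set P := [set p in C0 | e y p].
have P_nbr p : p \in P -> [/\ p \in C0, e y p & e x p].
  rewrite inE => /andP[pC0 eyp]; split => //.
  apply: clique_adj (geometric_clique CC_C0) xC0 pC0 eyp _.
  by rewrite -gdist_eq1 // gdistC // dxy.
rewrite -(card_in_imset (f := edge_clique y)) => [|p q Pp Pq eq_pq]; last first.
  (* two neighbours of [y] in [C0] spanning one clique through [y] would put [y] in [C0] *)
  apply/eqP; apply: contraNT yC0 => neq_pq.
  have [pC0 eyp _] := P_nbr p Pp; have [qC0 eyq _] := P_nbr q Pq.
  have [CC_yp yyp pyp] := edge_cliqueP eyp; have [_ _ qyq] := edge_cliqueP eyq.
  have epq : e p q := geometric_clique CC_C0 pC0 qC0 neq_pq.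
  rewrite (edge_clique_uniq epq CC_C0 pC0 qC0) -(edge_clique_uniq epq CC_yp pyp) //.
  by rewrite eq_pq.
apply/subset_leq_card/subsetP => _ /imsetP[p Pp ->].
have [_ eyp exp] := P_nbr p Pp; have [CC_Q yQ pQ] := edge_cliqueP eyp.
rewrite inE CC_Q yQ /=; apply/eqP/(dist_to_set1 e_sym e_irr e_conn _ pQ exp).
by apply: (clique_gdist2_notin e_sym e_irr e_conn (geometric_clique CC_Q) _ yQ); rewrite gdistC.
Qed.

Section CommonNeighbours.
Variables x y : 'I_n.
Hypothesis dxy : d x y = 2.
Local Notation M := [set z | e x z & e y z].

Lemma common_nbrs_subset_clique z :
  {in M &, forall z1 z2, z1 != z2 -> e z1 z2} -> z \in M -> M \subset edge_clique x z.
Proof.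
move=> cliqueM; rewrite inE => /andP[exz eyz].
have [CC_P xP _ _ dyP] := dist2_nbr_geometric dxy exz eyz.
set P := edge_clique x z in CC_P xP dyP *.
have neyx : ~~ e y x by rewrite -gdist_eq1 // gdistC // dxy.
have nbrs_yP : [set p in P | e y p] = M :&: P.
  apply/setP => p; rewrite !inE; have [pP|] /= := boolP (p \in P); last by rewrite andbF.
  rewrite andbT; apply/idP/andP => [eyp|[] //]; split => //.
  exact: (clique_adj (geometric_clique CC_P) xP pP eyp neyx).
apply/subsetPn => -[z' Mz' z'P]; move: (Mz'); rewrite inE => /andP[exz' eyz'].
have dz'P : dist_to_set e z' P = 1.
  by apply: (dist_to_set1 e_sym e_irr e_conn z'P xP); rewrite e_sym.
have := psi1_const (geometric_delsarte CC_P) dz'P (geometric_delsarte CC_P) dyP.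
rewrite nbrs_yP => card_eq.
(* [z'] sees [x] and, [M] being a clique, all of [M :&: P] *)
have : x |: (M :&: P) \subset [set p in P | e z' p].
  apply/subsetP => p; rewrite in_setU1 => /orP[/eqP->|]; first by rewrite inE xP e_sym.
  rewrite inE => /andP[Mp pP]; rewrite inE pP cliqueM //.
  by apply: contraNneq z'P => ->.
by move/subset_leq_card; rewrite cardsU1 card_eq !inE (negbTE neyx) andbF ltnn.
Qed.

Lemma card_common_nbrs_le1 z : z \in M -> M \subset edge_clique x z -> #|M| <= 1.
Proof.
rewrite inE => /andP[exz eyz] sub_MP.
have [CC_P xP _ yP dyP] := dist2_nbr_geometric dxy exz eyz.
have dyx : d y x = 2 by rewrite gdistC.
have [CC_Q yQ _ _ dxQ] := dist2_nbr_geometric dyx eyz exz.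
set P := edge_clique x z in CC_P xP yP dyP sub_MP *.
set Q := edge_clique y z in CC_Q yQ dxQ *.
have neyx : ~~ e y x by rewrite -gdist_eq1 // dyx.
have nbrs_yP : [set p in P | e y p] = M.
  apply/setP => p; rewrite !inE; apply/andP/andP => [[pP eyp]|[exp eyp]].
    by split => //; apply: clique_adj (geometric_clique CC_P) xP pP eyp neyx.
  by split => //; apply: (subsetP sub_MP); rewrite inE exp.
rewrite -nbrs_yP (psi1_const (geometric_delsarte CC_P) dyP (geometric_delsarte CC_Q) dxQ).
(* two neighbours of [x] in [Q] would lie in [M], hence span both [P] and [Q] *)
apply/card_le1_eqP => q1 q2; rewrite !inE => /andP[q1Q exq1] /andP[q2Q exq2].
apply/eqP; apply: contraNT yP => neq_q12.
have nexy : ~~ e x y by rewrite -gdist_eq1 // dxy.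
have Mq p : p \in Q -> e x p -> p \in P.
  move=> pQ exp; apply: (subsetP sub_MP); rewrite inE exp.
  exact: clique_adj (geometric_clique CC_Q) yQ pQ exp nexy.
have eq12 : e q1 q2 by apply: (geometric_clique CC_Q q1Q q2Q); rewrite eq_sym.
rewrite (edge_clique_uniq eq12 CC_P (Mq _ q1Q exq1) (Mq _ q2Q exq2)).
by rewrite -(edge_clique_uniq eq12 CC_Q q1Q q2Q).
Qed.

Lemma dist2_induced_quadrangle : 1 < #|M| ->
  exists u v w t : 'I_n, [/\ e u v, e v w, e w t, e t u
                        & [/\ u != w, v != t, ~~ e u w & ~~ e v t]].
Proof.
move=> M_gt1.
case: (boolP [exists z1, exists z2, [&& z1 \in M, z2 \in M, z1 != z2 & ~~ e z1 z2]]).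
  case/existsP => z1 /existsP[z2 /and4P[]]; rewrite !inE.
  move=> /andP[exz1 eyz1] /andP[exz2 eyz2] neq12 ne12.
  have ez1y : e z1 y by rewrite e_sym.
  have ez2x : e z2 x by rewrite e_sym.
  exists x, z1, y, z2; split => //; split => //.
    by rewrite eq_sym -(gdist_eq0 e_conn) dxy.
  by rewrite -gdist_eq1 // dxy.
move/existsPn => noM.
have cliqueM : {in M &, forall z1 z2, z1 != z2 -> e z1 z2}.
  move=> z1 z2 Mz1 Mz2 neq12; move/existsPn: (noM z1) => /(_ z2).
  by rewrite Mz1 Mz2 neq12 negbK.
have [z Mz] := card_gt0P (ltnW M_gt1).
have := card_common_nbrs_le1 Mz (common_nbrs_subset_clique cliqueM Mz).
by rewrite leqNgt M_gt1.
Qed.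

End CommonNeighbours.

End Geometric.

Theorem lemma4p2 (R : rcfType) (n : nat) (e : rel 'I_n) (b c : nat -> nat)
    (th : R) :
  symmetric e -> irreflexive e -> (forall x y, connect e x y) ->
  is_drg e b c -> (2 <= diameter e)%N -> (2 <= c 2)%N ->
  smallest_eigenvalue e th ->
  (exists CC, geometric_wrt e th (b 0%N) CC) ->
  (* (i) tau_2 >= psi_1 *)
  (forall CC : {set {set 'I_n}}, geometric_wrt e th (b 0%N) CC ->
   forall x y : 'I_n, gdist e x y = 2%N ->
   forall (C : {set 'I_n}) (x' : 'I_n), delsarte_clique e th (b 0%N) C ->
     dist_to_set e x' C = 1%N ->
     (#|[set z in C | e x' z]| <=
      #|[set C0 in CC | (y \in C0) && (dist_to_set e x C0 == 1%N)]|)%N) /\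
  (* (ii) an induced quadrangle *)
  (exists u v w t : 'I_n,
     [/\ e u v, e v w, e w t, e t u
       & [/\ u != w, v != t, ~~ e u w & ~~ e v t]]).
Proof.
move=> e_sym e_irr e_conn drg D_ge2 c2_ge2 [th_eig _] [CC0 geo0].
have n_gt1 := geometric_card_gt1 geo0; have n_gt0 := ltnW n_gt1.
have D_gt0 := ltnW D_ge2.
have th_neq0 := geometric_eigenvalue_neq0 e_sym e_irr e_conn geo0 n_gt0 D_gt0.
have psi1_const :=
  delsarte_psi1_const e_sym e_irr e_conn drg n_gt0 th_eig D_gt0 th_neq0 n_gt1.
split=> [CC geo x y dxy C x' delC dx'C|].
  exact: (tau2_ge_psi1 e_sym e_irr e_conn geo psi1_const dxy delC dx'C).
have [x [y dxy]] := diameter_attained e_sym e_conn n_gt0 D_ge2.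
apply: (dist2_induced_quadrangle e_sym e_irr e_conn geo0 psi1_const dxy).
apply: leq_trans c2_ge2 _; have [] := drg x y; rewrite dxy => <- _.
by apply/subset_leq_card/subsetP => z; rewrite !inE gdist_eq1 // andbC.
Qed.
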